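(* Let $z_1,\dots,z_5$ be nonzero complex numbers with $|z_1|\ge|z_2|\ge\cdots\ge|z_5|$ and $z_i^{-1}=z_{6-i}$ for $1\le i\le 5$. Then $$\sum_{i=1}^5|z_i|\le 2\Big|\sum_{i=1}^5 z_i^2\Big|^{1/2}+2\Big|\sum_{i=1}^5 z_i\Big|+15.$$ *)

From HB Require Import structures.
From mathcomp Require Import all_boot all_order all_algebra.
From mathcomp Require Import complex.
From mathcomp Require Import reals.

From HB Require Import structures.
From mathcomp Require Import all_boot all_order all_algebra.
From mathcomp Require Import complex reals ring.
Import Order.TTheory GRing.Theory Num.Theory.
Set Implicit Arguments.
Unset Strict Implicit.
Unset Printing Implicit Defensive.

(* Only the two largest terms a = z_1 and b = z_2 matter.  The middle term is
   its own inverse, so |z_3| = 1 and hence |z_4|, |z_5| <= 1; the last three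
   terms therefore move a + b and a^2 + b^2 by at most 3 each.  For a and b
   themselves, (a - b)^2 = 2 (a^2 + b^2) - (a + b)^2 gives
   |a - b| <= 2 sqrt|a^2 + b^2| + |a + b|, and 2a = (a + b) + (a - b) then
   yields |a| <= sqrt|a^2 + b^2| + |a + b|. *)

Local Open Scope ring_scope.
Local Open Scope complex_scope.

Lemma sum_ord5 (V : nmodType) (f : 'I_5 -> V) :
  \sum_(i < 5) f i
    = f (inord 0) + f (inord 1) + f (inord 2) + f (inord 3) + f (inord 4).
Proof.
rewrite !big_ord_recr big_ord0 /= add0r.
by congr (_ + _ + _ + _ + _); congr f; apply: val_inj; rewrite /= inordK.
Qed.

Lemma normr_selfinv (F : numFieldType) (x : F) :
  x != 0 -> x^-1 = x -> `|x| = 1.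
Proof.
move=> x0 xV; apply/eqP; rewrite -(pexpr_eq1 (n := 2)) // -normrX.
by rewrite expr2 -{1}xV mulVf // normr1.
Qed.

Section NumDomain.
Variable R : numDomainType.
Implicit Types a b c d e x : R.

Lemma normr_sum3_le c d e :
  `|c| <= 1 -> `|d| <= 1 -> `|e| <= 1 -> `|c + d + e| <= 3.
Proof.
move=> c1 d1 e1; apply: le_trans (ler_normD _ _) _.
apply: le_trans (lerD (ler_normD _ _) (lexx _)) _.
by apply: le_trans (lerD (lerD c1 d1) e1) _; rewrite -!natr1 add0r.
Qed.

Lemma ler_norm_perturb x e : `|x| <= `|x + e| + `|e|.
Proof. by rewrite -{1}(addrK e x); apply: ler_normB. Qed.

Lemma normrMn2_le_normD_normB a b : `|a| *+ 2 <= `|a + b| + `|a - b|.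
Proof.
have -> : `|a| *+ 2 = `|(a + b) + (a - b)| by rewrite -normrMn; congr `|_|; ring.
exact: ler_normD.
Qed.

Lemma sqr_normrB_le a b :
  `|a - b| ^+ 2 <= `|a ^+ 2 + b ^+ 2| *+ 2 + `|a + b| ^+ 2.
Proof.
rewrite -!normrX -normrMn.
have -> : (a - b) ^+ 2 = (a ^+ 2 + b ^+ 2) *+ 2 - (a + b) ^+ 2 by ring.
exact: ler_normB.
Qed.
End NumDomain.

Section NumClosedField.
Variable C : numClosedFieldType.
Implicit Types a b u v x y : C.

Lemma sqrtCD_le x y :
  0 <= x -> 0 <= y -> sqrtC (x + y) <= sqrtC x + sqrtC y.
Proof.
move=> x0 y0.
rewrite -[sqrtC x + sqrtC y]sqrCK ?addr_ge0 ?sqrtC_ge0 //.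
rewrite ler_sqrtC ?nnegrE ?exprn_ge0 ?addr_ge0 ?sqrtC_ge0 //.
by rewrite sqrrD !sqrtCK addrAC lerDl mulrn_wge0 // mulr_ge0 ?sqrtC_ge0.
Qed.

Lemma sqrtC3_le2 : sqrtC 3 <= 2 :> C.
Proof.
rewrite -(sqrCK (ler0n C 2)) ler_sqrtC ?nnegrE ?exprn_ge0 ?ler0n //.
by rewrite expr2 -natrM (ler_nat C 3 (2 * 2)).
Qed.

Lemma normrB_le_sqrtC a b :
  `|a - b| <= 2 * sqrtC `|a ^+ 2 + b ^+ 2| + `|a + b|.
Proof.
set q := `|a ^+ 2 + b ^+ 2|; have q0 : 0 <= q := normr_ge0 _.
have sq0 : 0 <= sqrtC q by rewrite sqrtC_ge0.
rewrite -ler_sqr ?nnegrE ?addr_ge0 ?mulr_ge0 //.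
apply: le_trans (sqr_normrB_le a b) _; rewrite -/q sqrrD exprMn sqrtCK lerD2r.
apply: le_trans (_ : _ <= 2 ^+ 2 * q) _.
  by rewrite -[q *+ 2]mulr_natl; apply: (ler_wpM2r q0); rewrite expr2 -natrM ler_nat.
by rewrite lerDl mulrn_wge0 // !mulr_ge0.
Qed.

Lemma normr_le_sqrtC_sqrD_normD a b :
  `|a| <= sqrtC `|a ^+ 2 + b ^+ 2| + `|a + b|.
Proof.
suff : `|a| *+ 2 <= (sqrtC `|a ^+ 2 + b ^+ 2| + `|a + b|) *+ 2 by rewrite lerMn2r.
apply: le_trans (normrMn2_le_normD_normB a b) _.
apply: le_trans (lerD (lexx _) (normrB_le_sqrtC a b)) _.
by rewrite le_eqVlt; apply/orP; left; apply/eqP; ring.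
Qed.

Lemma normr_le_sqrtC_sqrD_normD_perturbed a b u v :
  `|u| <= 3 -> `|v| <= 3 ->
  `|a| <= sqrtC `|a ^+ 2 + b ^+ 2 + v| + `|a + b + u| + 5.
Proof.
move=> u3 v3; apply: le_trans (normr_le_sqrtC_sqrD_normD a b) _.
have sum_le : `|a + b| <= `|a + b + u| + 3.
  exact: le_trans (ler_norm_perturb _ u) (lerD (lexx _) u3).
have sqrt_le : sqrtC `|a ^+ 2 + b ^+ 2| <= sqrtC `|a ^+ 2 + b ^+ 2 + v| + 2.
  have q_le : `|a ^+ 2 + b ^+ 2| <= `|a ^+ 2 + b ^+ 2 + v| + 3.
    exact: le_trans (ler_norm_perturb _ v) (lerD (lexx _) v3).
  apply: le_trans (_ : _ <= sqrtC (`|a ^+ 2 + b ^+ 2 + v| + 3)) _.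
    by rewrite ler_sqrtC ?nnegrE ?addr_ge0.
  apply: le_trans (sqrtCD_le _ _) _; rewrite ?lerD2l //.
  by rewrite sqrtC3_le2.
apply: le_trans (lerD sqrt_le sum_le) _.
by rewrite addrACA -natrD.
Qed.

End NumClosedField.

Theorem lemma3p8 (R : realType) (z : 'I_5 -> R[i])
  (hnz : forall i, z i != 0)
  (hdec : forall i j : 'I_5, (i <= j)%N -> `|z j| <= `|z i|)
  (hinv : forall i : 'I_5, (z i)^-1 = z (rev_ord i)) :
  \sum_(i < 5) `|z i|
    <= 2 * sqrtC `|\sum_(i < 5) z i ^+ 2| + 2 * `|\sum_(i < 5) z i| + 15.
Proof.
have normz_le i j : (i <= j < 5)%N -> `|z (inord j)| <= `|z (inord i)|.
  by case/andP=> ij j5; apply: hdec; rewrite !inordK // (leq_ltn_trans ij).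
rewrite !sum_ord5.
set a := z (inord 0); set b := z (inord 1); set c := z (inord 2).
set d := z (inord 3); set e := z (inord 4).
have c_eq1 : `|c| = 1.
  apply: normr_selfinv (hnz _) _.
  by rewrite hinv; congr z; apply: val_inj; rewrite /= inordK.
have c1 : `|c| <= 1 by rewrite c_eq1.
have d1 : `|d| <= 1 := le_trans (normz_le 2 3 isT) c1.
have e1 : `|e| <= 1 := le_trans (normz_le 3 4 isT) d1.
have sqr_le1 (x : R[i]) : `|x| <= 1 -> `|x ^+ 2| <= 1.
  by move=> x1; rewrite normrX exprn_ile1.
have a_le := normr_le_sqrtC_sqrD_normD_perturbed a b
  (normr_sum3_le c1 d1 e1)
  (normr_sum3_le (sqr_le1 _ c1) (sqr_le1 _ d1) (sqr_le1 _ e1)).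
have -> : a + b + c + d + e = a + b + (c + d + e) by rewrite !addrA.
have -> : a ^+ 2 + b ^+ 2 + c ^+ 2 + d ^+ 2 + e ^+ 2
        = a ^+ 2 + b ^+ 2 + (c ^+ 2 + d ^+ 2 + e ^+ 2) by rewrite !addrA.
apply: le_trans (lerD (lerD (lerD (lerD (lexx `|a|) (normz_le 0 1 isT)) c1) d1) e1) _.
apply: le_trans (lerD (lerD (lerD (lerD a_le a_le) (lexx 1)) (lexx 1)) (lexx 1)) _.
by rewrite -subr_ge0 (_ : _ - _ = 2) ?ler0n //; ring.
Qed.
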